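(* Let $X$ and $a$ be variables, let $C_k=\frac1{k+1}\binom{2k}{k}$ denote the Catalan numbers, and let $U_n(x)$ be the Chebyshev polynomials of the second kind, defined by $\sum_{n\ge0}U_n(x)z^n=\frac1{1-2xz+z^2}$, with $U_{-1}(x)=0$. Then for all positive integers $n$, $$\det_{0\le i,j\le n-1}\left(X(-2a)^{i+j}+\sum_{k=0}^{\lfloor(i+j-1)/2\rfloor}(-2a)^{i+j-2k-1}C_k\right)=(-1)^{n-1}\big(XU_{n-1}(-a)+U_{n-2}(-a)\big).$$
   Context: An empty sum (when $\lfloor(i+j-1)/2\rfloor<0$) equals $0$. *)

From mathcomp Require Import all_boot all_order all_algebra.
Set Implicit Arguments. Unset Strict Implicit. Unset Printing Implicit Defensive.
Import GRing.Theory.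
Local Open Scope ring_scope.

(* Catalan numbers C_k = binom(2k,k)/(k+1) (an exact division in nat). *)
Definition catalan (k : nat) : nat := ('C(2 * k, k) %/ k.+1)%N.

(* chebV x m = U_{m-1}(x):  U_{-1} = 0, U_0 = 1, U_{m+1} = 2x U_m - U_{m-1};
   this recurrence is exactly the coefficient identity of
   (1 - 2xz + z^2) * sum_n U_n(x) z^n = 1. *)
Fixpoint chebV (R : comRingType) (x : R) (m : nat) : R :=
  match m with
  | 0%N => 0
  | 1%N => 1
  | (m'.+1 as m1).+1 => 2%:R * x * chebV x m1 - chebV x m'
  end.

(* Chebyshev polynomial of the second kind U_m(x), for integer m >= -1
   (value 0 for m < -1, never used). *)
Definition chebU (R : comRingType) (x : R) (m : int) : R :=
  match m with
  | Posz k => chebV x k.+1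
  | Negz _ => 0
  end.

From mathcomp Require Import all_boot all_order all_algebra zify ring.
Set Implicit Arguments. Unset Strict Implicit.
Import GRing.Theory.
Local Open Scope ring_scope.

(* Write b = -2a and h_m = X b^m + \sum_k b^(m-2k-1) C_k, so that the matrix is
   (h_(i+j)).  Then h_(m+1) = b h_m + mu_m, where mu_m (C_(m/2) for even m, 0 for
   odd m) are the moments of the functional L for which the polynomials
   p_j(x) = U_j(x/2) are orthonormal: L(x^k p_j) is the number of nonnegative
   +-1 paths of length k between heights j and 0, which is 0 for k < j and 1
   for k = j.  Multiplying the Hankel matrix on the left by the unitriangular
   matrix with rows 1, (x - b) p_0, ..., (x - b) p_(n-2) and on the right by the
   transposed coefficient matrix of p_0, ..., p_(n-1) therefore turns rows
   1, ..., n-1 into the unit vectors e_0, ..., e_(n-2), and row 0 into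
   (L_h(p_j))_j = (X U_j(-a) + U_(j-1)(-a))_j, both sides obeying the Chebyshev
   recurrence.  Expanding along the last column gives the determinant. *)

Lemma nat_ind2 (P : nat -> Prop) : P 0%N -> P 1%N ->
  (forall j, P j -> P j.+1 -> P j.+2) -> forall j, P j.
Proof.
move=> P0 P1 PSS j; suff: P j /\ P j.+1 by case.
by elim: j => [|j [IHj IHSj]]; split => //; apply: PSS.
Qed.

(* [ballot k j] counts the paths of k steps +-1 from height j to height 0
   that never go below 0. *)
Fixpoint ballot (k j : nat) : nat :=
  if k is k'.+1 then ((if j is j'.+1 then ballot k' j' else 0) + ballot k' j.+1)%N
  else (j == 0)%N.

Lemma ballot_gt k j : (k < j)%N -> ballot k j = 0%N.
Proof. by elim: k j => [|k IHk] [|j] //= ltkj; rewrite !IHk //; lia. Qed.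

Lemma ballot_diag k : ballot k k = 1%N.
Proof. by elim: k => //= k ->; rewrite ballot_gt. Qed.

Lemma ballot_odd k j : odd (k + j) -> ballot k j = 0%N.
Proof.
elim: k j => [|k IHk] [|j] //= oddkj; rewrite ?add0n !IHk //;
  move: oddkj; rewrite ?(addSn, addnS, addn0) /= ?negbK //.
Qed.

Lemma ballot_reflection k j u : (k + j = u + u)%N ->
  (ballot k j + 'C(k, u.+1) = 'C(k, u))%N.
Proof.
elim: k j u => [|k IHk] j u kju.
  rewrite /= bin0n; case: u kju => [|u] /= kju; first by have ->: j = 0%N by lia.
  by have -> : (j == 0%N) = false by apply/eqP; lia.
case: u kju => [|u] kju; first by lia.
case: j kju => [|j] kju /=.
- have := IHk 1%N u.+1 ltac:(lia).
  have -> : 'C(k, u.+1) = 'C(k, u) by rewrite -bin_sub; [congr 'C(_, _); lia | lia].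
  rewrite !binS; lia.
- have := IHk j u ltac:(lia); have := IHk j.+2 u.+1 ltac:(lia).
  rewrite !binS; lia.
Qed.

Lemma ballot_catalan m : ballot (m + m) 0 = catalan m.
Proof.
have reflect_m := ballot_reflection (addn0 (m + m)%N).
have := mul_bin_left (m + m) m; rewrite (_ : (m + m - m = m)%N); last by lia.
rewrite -reflect_m => bin_m.
rewrite /catalan mul2n -addnn (_ : 'C(_, _) = m.+1 * ballot (m + m) 0)%N ?mulKn //.
nia.
Qed.

(* [chebcoef j l] is the coefficient of x^l in p_j(x) = U_j(x/2), where
   p_0 = 1, p_1 = x and p_(j+2) = x p_(j+1) - p_j. *)
Fixpoint chebcoef {R : comRingType} (j : nat) : nat -> R :=
  match j with
  | 0%N => fun l => (l == 0%N)%:R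
  | 1%N => fun l => (l == 1%N)%:R
  | (j'.+1 as j1).+1 =>
      fun l => (if l is l'.+1 then chebcoef j1 l' else 0) - chebcoef j' l
  end.

Section ChebyshevCoefficients.
Variable R : comRingType.

Lemma chebcoefSS j l :
  chebcoef j.+2 l = (if l is l'.+1 then chebcoef j.+1 l' else 0) - chebcoef j l :> R.
Proof. by case: l. Qed.

Lemma chebcoef_gt j l : (j < l)%N -> chebcoef j l = 0 :> R.
Proof.
elim/nat_ind2: j l => [|| j IHj IHSj] [|[|l]] // ltjl.
by rewrite chebcoefSS IHSj ?IHj ?subr0 //; lia.
Qed.

Lemma chebcoef_diag j : chebcoef j j = 1 :> R.
Proof.
elim/nat_ind2: j => [|| j _ IHSj] //.
by rewrite chebcoefSS IHSj chebcoef_gt ?subr0.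
Qed.

Lemma sum_chebcoef_widen (G : nat -> R) j M : (j < M)%N ->
  \sum_(l < M) chebcoef j l * G l = \sum_(l < j.+1) chebcoef j l * G l.
Proof.
move=> ltjM; rewrite -(subnKC ltjM) big_split_ord /= [X in _ + X]big1 ?addr0 // => l _.
by rewrite chebcoef_gt ?mul0r // leq_addr.
Qed.

Lemma sum_chebcoefSS (G : nat -> R) j :
  \sum_(l < j.+3) chebcoef j.+2 l * G l
  = \sum_(l < j.+2) chebcoef j.+1 l * G l.+1 - \sum_(l < j.+1) chebcoef j l * G l.
Proof.
under eq_bigr => l _ do rewrite chebcoefSS mulrBl.
by rewrite sumrB big_ord_recl mul0r add0r (sum_chebcoef_widen G) //; lia.
Qed.

Lemma chebcoef_ballot j k :
  \sum_(l < j.+1) chebcoef j l * (ballot (l + k) 0)%:R = (ballot k j)%:R :> R.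
Proof.
elim/nat_ind2: j k => [|| j IHj IHSj] k.
- by rewrite big_ord1 mul1r.
- by rewrite !big_ord_recl big_ord0 /= mul0r mul1r add0r addr0 add0n.
- rewrite (sum_chebcoefSS (fun l => (ballot (l + k)%N 0)%:R)).
  under eq_bigr => l _ do rewrite addSnnS.
  by rewrite IHSj IHj /= natrD addrC addKr.
Qed.

Lemma chebcoef_ballot_orth N i j : (i < N)%N -> (j < N)%N ->
  \sum_(k < N) chebcoef j k * (ballot k i)%:R = (i == j)%:R :> R.
Proof.
move=> ltiN ltjN; rewrite (sum_chebcoef_widen (fun k => (ballot k i)%:R)) //.
case: (leqP j i) => [leji|ltij].
- rewrite big_ord_recr /= big1 ?add0r => [|k _]; last first.
    by rewrite ballot_gt ?mulr0 //; have := ltn_ord k; lia.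
  rewrite chebcoef_diag mul1r.
  have [->|neij] := eqVneq i j; first by rewrite ballot_diag.
  by rewrite ballot_gt //; move/eqP: neij; lia.
- rewrite (_ : i == j = false); last by apply/eqP; lia.
  under eq_bigr => k _ do rewrite -chebcoef_ballot mulr_sumr.
  rewrite exchange_big big1 //= => l _.
  under eq_bigr => k _ do rewrite mulrCA addnC.
  rewrite -mulr_sumr (sum_chebcoef_widen (fun k => (ballot (k + l)%N 0)%:R)) //.
  rewrite chebcoef_ballot ballot_gt ?mulr0 //.
  have := ltn_ord l; lia.
Qed.

End ChebyshevCoefficients.

Section CatalanHankel.
Variables (R : comRingType) (X b : R).

Definition catalan_hankel (m : nat) : R :=
  X * b ^+ m + \sum_(k < m.+1./2) b ^+ (m - 2 * k - 1) * (catalan k)%:R.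

Lemma catalan_hankelS m :
  catalan_hankel m.+1 = b * catalan_hankel m + (ballot m 0)%:R.
Proof.
have mulb_sum n : b * \sum_(k < n.+1./2) b ^+ (n - 2 * k - 1) * (catalan k)%:R
    = \sum_(k < n.+1./2) b ^+ (n.+1 - 2 * k - 1) * (catalan k)%:R.
  rewrite mulr_sumr; apply: eq_bigr => k _; rewrite mulrA -exprS; congr (b ^+ _ * _).
  have := ltn_ord k; move: (nat_of_ord k) => i; rewrite -divn2; lia.
rewrite /catalan_hankel.
suff -> : \sum_(k < m.+2./2) b ^+ (m.+1 - 2 * k - 1) * (catalan k)%:R
    = b * \sum_(k < m.+1./2) b ^+ (m - 2 * k - 1) * (catalan k)%:R + (ballot m 0)%:R.
  by rewrite exprS; ring.
have [r [-> | ->]] : exists r, m = r.*2 \/ m = r.*2.+1 by exists m./2; lia.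
- rewrite mulb_sum /= uphalf_double doubleK big_ord_recr /= -addnn ballot_catalan.
  by rewrite (_ : (r + r).+1 - 2 * r - 1 = 0)%N ?mul1r //; lia.
- rewrite mulb_sum ballot_odd ?addr0 ?addn0 /= ?odd_double //.
  by rewrite uphalf_double doubleK.
Qed.

End CatalanHankel.

Lemma chebVSS (R : comRingType) (x : R) m :
  chebV x m.+2 = 2%:R * x * chebV x m.+1 - chebV x m.
Proof. by case: m. Qed.

Lemma sum_chebcoef_hankel (R : comRingType) (X x : R) j :
  \sum_(l < j.+1) chebcoef j l * catalan_hankel X (2%:R * x) l
  = X * chebV x j.+1 + chebV x j.
Proof.
set h := catalan_hankel X (2%:R * x).
elim/nat_ind2: j => [|| j IHj IHSj].
- by rewrite big_ord1 mul1r /h /catalan_hankel big_ord0 mulr1 !addr0.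
- rewrite !big_ord_recl big_ord0 /= mul0r mul1r add0r addr0 /h catalan_hankelS.
  by rewrite /catalan_hankel big_ord0 expr0 /=; ring.
- rewrite (sum_chebcoefSS h) IHj.
  have -> : \sum_(l < j.+2) chebcoef j.+1 l * h l.+1
      = 2%:R * x * \sum_(l < j.+2) chebcoef j.+1 l * h l
        + \sum_(l < j.+2) chebcoef j.+1 l * (ballot (l + 0) 0)%:R.
    rewrite mulr_sumr -big_split; apply: eq_bigr => l _.
    by rewrite /h catalan_hankelS addn0 mulrDr mulrCA.
  by rewrite IHSj chebcoef_ballot addr0 !chebVSS; ring.
Qed.

Definition xsub_chebcoef (R : comRingType) (b : R) (i k : nat) : R :=
  if i is i'.+1 then (if k is k'.+1 then chebcoef i' k' else 0) - b * chebcoef i' k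
  else (k == 0%N)%:R.

Lemma xsub_chebcoef_gt (R : comRingType) (b : R) i k :
  (i < k)%N -> xsub_chebcoef b i k = 0.
Proof.
case: i => [|i]; first by case: k.
by case: k => [|k] // ltik; rewrite /= !chebcoef_gt ?mulr0 ?subr0 //; lia.
Qed.

Lemma xsub_chebcoef_diag (R : comRingType) (b : R) i : xsub_chebcoef b i i = 1.
Proof. by case: i => //= i; rewrite chebcoef_diag chebcoef_gt ?mulr0 ?subr0. Qed.

Lemma sum_xsub_chebcoef_hankel (R : comRingType) (X b : R) N i k : (i < N)%N ->
  \sum_(l < N) xsub_chebcoef b i l * catalan_hankel X b (l + k)
  = if i is i'.+1 then (ballot k i')%:R else catalan_hankel X b k.
Proof.
set h := catalan_hankel X b.
case: N => // N; case: i => [|i] ltiN.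
  by rewrite big_ord_recl mul1r big1 ?addr0 // => l _; rewrite mul0r.
under eq_bigr => l _ do rewrite /= mulrBl -mulrA.
rewrite sumrB big_ord_recl mul0r add0r -mulr_sumr.
rewrite (sum_chebcoef_widen (fun l => h (bump 0 l + k)%N)) //.
rewrite (sum_chebcoef_widen (fun l => h (l + k)%N)); last by lia.
rewrite -chebcoef_ballot mulr_sumr -sumrB; apply: eq_bigr => l _.
by rewrite /h /bump add1n addSn catalan_hankelS; ring.
Qed.

Lemma det_unitrig (R : comRingType) n (M : 'M[R]_n) :
  (forall i j : 'I_n, (i < j)%N -> M i j = 0) -> (forall i, M i i = 1) -> \det M = 1.
Proof. by move=> M_trig M_diag; rewrite det_trig ?big1 //; apply/is_trig_mxP. Qed.

Lemma det_companion_row0 (R : comRingType) m (F : nat -> R) :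
  \det (\matrix_(i < m.+1, j < m.+1) (if (i : nat) is i'.+1 then (i' == j)%:R else F j))
  = (-1) ^+ m * F m.
Proof.
rewrite (expand_det_col _ ord_max) big_ord_recl big1 ?addr0 => [|i _]; last first.
  rewrite !mxE lift0 /= (_ : (i == m :> nat) = false) ?mul0r //.
  by apply/eqP; have := ltn_ord i; lia.
rewrite mxE /cofactor /= add0n mulrC.
suff -> : row' ord0 (col' ord_max (\matrix_(i < m.+1, j < m.+1)
    (if (i : nat) is i'.+1 then (i' == j)%:R else F j))) = 1%:M by rewrite det1 mulr1.
by apply/matrixP => i j; rewrite !mxE lift0 /= /bump leqNgt (ltn_ord j).
Qed.

Definition hankel_mx (R : comRingType) n (h : nat -> R) : 'M[R]_n :=
  \matrix_(i, j) h (i + j)%N.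

Lemma det_catalan_hankel (R : comRingType) (X x : R) m :
  \det (hankel_mx m.+1 (catalan_hankel X (2%:R * x)))
  = (-1) ^+ m * (X * chebV x m.+1 + chebV x m).
Proof.
set b := 2%:R * x; set H := hankel_mx _ _.
set A := \matrix_(i < m.+1, k < m.+1) xsub_chebcoef b i k.
set P := \matrix_(j < m.+1, l < m.+1) chebcoef j l : 'M[R]_m.+1.
have detA : \det A = 1.
  by apply: det_unitrig => [i j lt_ij|i]; rewrite mxE ?xsub_chebcoef_diag ?xsub_chebcoef_gt.
have detP : \det P = 1.
  by apply: det_unitrig => [i j lt_ij|i]; rewrite mxE ?chebcoef_diag ?chebcoef_gt.
have AH_row i k :
    (A *m H) i k = if (i : nat) is i'.+1 then (ballot k i')%:R else catalan_hankel X b k.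
  rewrite mxE -(sum_xsub_chebcoef_hankel X b k (ltn_ord i)).
  by apply: eq_bigr => l _; rewrite !mxE.
have <- : \det (A *m H *m P^T) = \det H.
  by rewrite !det_mulmx det_tr detA detP mul1r mulr1.
rewrite -[RHS](det_companion_row0 m (fun j => X * chebV x j.+1 + chebV x j)).
congr (\det _); apply/matrixP => i j; rewrite !mxE.
under eq_bigr => k _ do rewrite AH_row !mxE mulrC.
case: i => [[|i] lt_i_m] /=.
- by rewrite -sum_chebcoef_hankel (sum_chebcoef_widen (catalan_hankel X b)).
- exact: chebcoef_ballot_orth (ltnW lt_i_m) (ltn_ord j).
Qed.

Lemma chebU_chebV (R : comRingType) (x : R) m : chebU x (m%:Z - 1) = chebV x m.
Proof. by case: m => [|m] //; rewrite (_ : m.+1%:Z - 1 = m) // -addn1 PoszD addrK. Qed.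

Theorem theorem14 (R : comRingType) (X a : R) (n : nat) (hn : (0 < n)%N) :
  \det (\matrix_(i < n, j < n)
          (X * (- (2%:R * a)) ^+ (i + j)
           + \sum_(k < (i + j).+1./2)
               (- (2%:R * a)) ^+ (i + j - 2 * k - 1) * (catalan k)%:R))
  = (-1) ^+ n.-1 * (X * chebU (- a) (n%:Z - 1) + chebU (- a) (n%:Z - 2)).
Proof.
case: n hn => // m _.
rewrite -mulrN (det_catalan_hankel X (- a) m) chebU_chebV.
by rewrite (_ : m.+1%:Z - 2 = m%:Z - 1) ?chebU_chebV.
Qed.
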